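(* Let $L\dashv R\colon \mathcal{X}\to\mathcal{A}$ be a geometric morphism. Then the category ${}_L\mathbf{StrCsp}$ is a topos.
   Context: A geometric morphism $L\dashv R\colon\mathcal{X}\to\mathcal{A}$ here means an adjunction between topoi $\mathcal{X}$ and $\mathcal{A}$ with left adjoint $L\colon\mathcal{A}\to\mathcal{X}$, right adjoint $R\colon\mathcal{X}\to\mathcal{A}$, and $L$ left exact (preserves finite limits). An $L$-structured cospan is a diagram $La\to x\leftarrow Lb$ in $\mathcal{X}$ with $a,b$ objects of $\mathcal{A}$. The category ${}_L\mathbf{StrCsp}$ has $L$-structured cospans as objects; an arrow from $La\to x\leftarrow Lb$ to $Lc\to y\leftarrow Ld$ is a triple $(f,g,h)$ with $f\colon a\to c$, $h\colon b\to d$ in $\mathcal{A}$ and $g\colon x\to y$ in $\mathcal{X}$ such that the two squares formed with $Lf$, $g$, $Lh$ commute. *)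

From Stdlib Require Import ProofIrrelevance.

Set Implicit Arguments.

Record Category := {
  Ob :> Type;
  Hom : Ob -> Ob -> Type;
  idm : forall a, Hom a a;
  comp : forall x y z, Hom y z -> Hom x y -> Hom x z;
  comp_id_l : forall a b (f : Hom a b), comp (idm b) f = f;
  comp_id_r : forall a b (f : Hom a b), comp f (idm a) = f;
  comp_assoc : forall a b c d (f : Hom c d) (g : Hom b c) (h : Hom a b),
      comp f (comp g h) = comp (comp f g) h
}.
Arguments Hom {C} _ _ : rename.
Arguments idm {C} a : rename.
Arguments comp {C x y z} _ _ : rename.

Record Functor (C D : Category) := {
  fobj :> C -> D;
  fmap : forall a b, Hom a b -> Hom (fobj a) (fobj b);
  fmap_id : forall a, fmap a a (idm a) = idm (fobj a);
  fmap_comp : forall a b c (f : Hom b c) (g : Hom a b),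
      fmap a c (comp f g) = comp (fmap b c f) (fmap a b g)
}.
Arguments fmap {C D} f0 {a b} _.

Section Limits.
Variable C : Category.

Definition is_terminal (t : C) : Prop :=
  forall x : C, exists f : Hom x t, forall g : Hom x t, g = f.

Definition is_pullback {a b c : C} (f : Hom a c) (g : Hom b c)
    (p : C) (p1 : Hom p a) (p2 : Hom p b) : Prop :=
  comp f p1 = comp g p2 /\
  forall (q : C) (q1 : Hom q a) (q2 : Hom q b), comp f q1 = comp g q2 ->
    exists u : Hom q p, comp p1 u = q1 /\ comp p2 u = q2 /\
      forall v : Hom q p, comp p1 v = q1 -> comp p2 v = q2 -> v = u.

Definition is_product {a b p : C} (p1 : Hom p a) (p2 : Hom p b) : Prop :=
  forall (q : C) (q1 : Hom q a) (q2 : Hom q b),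
    exists u : Hom q p, comp p1 u = q1 /\ comp p2 u = q2 /\
      forall v : Hom q p, comp p1 v = q1 -> comp p2 v = q2 -> v = u.

Definition has_finite_limits : Prop :=
  (exists t : C, is_terminal t) /\
  (forall (a b c : C) (f : Hom a c) (g : Hom b c),
     exists (p : C) (p1 : Hom p a) (p2 : Hom p b), is_pullback f g p p1 p2).

(** [e] (with product [p = e × a] and evaluation [ev]) is an exponential [b^a]. *)
Definition is_exponential {a b e p : C} (p1 : Hom p e) (p2 : Hom p a)
    (ev : Hom p b) : Prop :=
  is_product p1 p2 /\
  forall (x q : C) (q1 : Hom q x) (q2 : Hom q a), is_product q1 q2 ->
  forall f : Hom q b,
    let P := fun g : Hom x e =>
      forall m : Hom q p, comp p1 m = comp g q1 -> comp p2 m = q2 ->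
        comp ev m = f in
    exists g : Hom x e, P g /\ forall g' : Hom x e, P g' -> g' = g.

Definition cartesian_closed : Prop :=
  (forall a b : C, exists (p : C) (p1 : Hom p a) (p2 : Hom p b), is_product p1 p2) /\
  (forall a b : C, exists (e p : C) (p1 : Hom p e) (p2 : Hom p a) (ev : Hom p b),
      is_exponential p1 p2 ev).

Definition mono {u x : C} (m : Hom u x) : Prop :=
  forall (z : C) (f g : Hom z u), comp m f = comp m g -> f = g.

Definition has_subobject_classifier : Prop :=
  exists (t Omega : C) (tru : Hom t Omega), is_terminal t /\
    forall (u x : C) (m : Hom u x), mono m ->
      let P := fun chi : Hom x Omega =>
        forall k : Hom u t, is_pullback chi tru u m k in
      exists chi : Hom x Omega, P chi /\ forall chi', P chi' -> chi' = chi.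

Definition is_topos : Prop :=
  has_finite_limits /\ cartesian_closed /\ has_subobject_classifier.

End Limits.
Arguments is_terminal {C} t.
Arguments is_pullback {C a b c} f g p p1 p2.
Arguments is_product {C a b p} p1 p2.
Arguments is_exponential {C a b e p} p1 p2 ev.
Arguments mono {C u x} m.

Definition is_adjunction {A X : Category} (L : Functor A X) (R : Functor X A) : Prop :=
  exists (eta : forall a : A, Hom a (R (L a))) (eps : forall x : X, Hom (L (R x)) x),
    (forall (a a' : A) (f : Hom a a'), comp (eta a') f = comp (fmap R (fmap L f)) (eta a)) /\
    (forall (x x' : X) (g : Hom x x'), comp g (eps x) = comp (eps x') (fmap L (fmap R g))) /\
    (forall a : A, comp (eps (L a)) (fmap L (eta a)) = idm (L a)) /\
    (forall x : X, comp (fmap R (eps x)) (eta (R x)) = idm (R x)).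

Definition left_exact {A X : Category} (L : Functor A X) : Prop :=
  (forall t : A, is_terminal t -> is_terminal (L t)) /\
  (forall (a b c p : A) (f : Hom a c) (g : Hom b c) (p1 : Hom p a) (p2 : Hom p b),
     is_pullback f g p p1 p2 ->
     is_pullback (fmap L f) (fmap L g) (L p) (fmap L p1) (fmap L p2)).

Definition geometric_morphism {A X : Category} (L : Functor A X) (R : Functor X A) : Prop :=
  is_topos A /\ is_topos X /\ is_adjunction L R /\ left_exact L.

Section StrCsp.
Variables (A X : Category) (L : Functor A X).

Record SCObj := {
  sc_a : A; sc_b : A; sc_x : X;
  sc_l : Hom (L sc_a) sc_x;
  sc_r : Hom (L sc_b) sc_x
}.

Record SCHom (c d : SCObj) := {
  sc_f : Hom (sc_a c) (sc_a d);
  sc_g : Hom (sc_x c) (sc_x d);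
  sc_h : Hom (sc_b c) (sc_b d);
  sc_sql : comp sc_g (sc_l c) = comp (sc_l d) (fmap L sc_f);
  sc_sqr : comp sc_g (sc_r c) = comp (sc_r d) (fmap L sc_h)
}.

Lemma SCHom_eq (c d : SCObj) (u v : SCHom c d) :
  sc_f u = sc_f v -> sc_g u = sc_g v -> sc_h u = sc_h v -> u = v.
Proof.
  destruct u as [f g h l r], v as [f' g' h' l' r']; simpl; intros -> -> ->.
  f_equal; apply proof_irrelevance.
Qed.

Program Definition SC_id (c : SCObj) : SCHom c c :=
  {| sc_f := idm _; sc_g := idm _; sc_h := idm _ |}.
Next Obligation. intros c; rewrite fmap_id, comp_id_l, comp_id_r; reflexivity. Qed.
Next Obligation. intros c; rewrite fmap_id, comp_id_l, comp_id_r; reflexivity. Qed.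

Program Definition SC_comp (c d e : SCObj) (u : SCHom d e) (v : SCHom c d) : SCHom c e :=
  {| sc_f := comp (sc_f u) (sc_f v); sc_g := comp (sc_g u) (sc_g v);
     sc_h := comp (sc_h u) (sc_h v) |}.
Next Obligation.
  intros c d e u v; simpl.
  rewrite <- comp_assoc, sc_sql, comp_assoc, sc_sql, <- comp_assoc, fmap_comp; reflexivity.
Qed.
Next Obligation.
  intros c d e u v; simpl.
  rewrite <- comp_assoc, sc_sqr, comp_assoc, sc_sqr, <- comp_assoc, fmap_comp; reflexivity.
Qed.

Program Definition StrCsp : Category :=
  {| Ob := SCObj; Hom := SCHom; idm := SC_id; comp := SC_comp |}.
Next Obligation. intros; apply SCHom_eq; simpl; apply comp_id_l. Qed.
Next Obligation. intros; apply SCHom_eq; simpl; apply comp_id_r. Qed.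
Next Obligation. intros; apply SCHom_eq; simpl; apply comp_assoc. Qed.

End StrCsp.

(* Transposing along L ⊣ R turns an L-structured cospan La → x ← Lb into a cospan
   a → Rx ← b in A, so StrCsp L is the Artin gluing of A × A with X along x ↦ (Rx, Rx).
   As R preserves limits, the terminal object and pullbacks (hence products) are computed
   componentwise.  Over the exponential y^x of X, each A-side of the exponential of
   (a, α : a → Rx) and (a', α' : a' → Ry) is the pullback of a'^a → (Ry)^a ← R(y^x), the
   maps being composition with α' and R(ev) restricted along α.  The subobject classifier
   lies over Ω_X; both of its A-sides are P = {(p, q) ∈ Ω_A × RΩ_X | p ≤ τ q}, where τ
   classifies R(true_X). *)

From Stdlib Require Import IndefiniteDescription.

Infix "∘" := comp (at level 40, left associativity).

Definition choose {T : Type} {P : T -> Prop} (H : exists x, P x) : T :=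
  proj1_sig (constructive_indefinite_description P H).

Lemma choose_spec {T : Type} {P : T -> Prop} (H : exists x, P x) : P (choose H).
Proof. exact (proj2_sig (constructive_indefinite_description P H)). Qed.

Section UniversalMaps.
Context {C : Category}.

Lemma comp_eq_extend_r {a b c d : C} {f : Hom b c} {g : Hom a b} {h : Hom a c}
    (E : f ∘ g = h) (k : Hom d a) : f ∘ (g ∘ k) = h ∘ k.
Proof. rewrite comp_assoc, E; reflexivity. Qed.

Lemma terminal_unique {t : C} (Ht : is_terminal t) {x : C} (f g : Hom x t) : f = g.
Proof. destruct (Ht x) as [h Hh]; rewrite (Hh f), (Hh g); reflexivity. Qed.

Lemma mono_from_terminal {t : C} (Ht : is_terminal t) {y : C} (m : Hom t y) : mono m.
Proof. intros z f g _; apply (terminal_unique Ht). Qed.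

Section Pullback.
Context {a b c p : C} {f : Hom a c} {g : Hom b c} {p1 : Hom p a} {p2 : Hom p b}
  (H : is_pullback f g p p1 p2).

Definition pb_pair {q : C} (q1 : Hom q a) (q2 : Hom q b) (E : f ∘ q1 = g ∘ q2) : Hom q p :=
  choose (proj2 H q q1 q2 E).

Lemma pb_pair_fst {q} (q1 : Hom q a) q2 E : p1 ∘ pb_pair q1 q2 E = q1.
Proof. apply (choose_spec (proj2 H q q1 q2 E)). Qed.

Lemma pb_pair_snd {q} (q1 : Hom q a) q2 E : p2 ∘ pb_pair q1 q2 E = q2.
Proof. apply (choose_spec (proj2 H q q1 q2 E)). Qed.

Lemma pb_pair_unique {q} (q1 : Hom q a) q2 E (v : Hom q p) :
  p1 ∘ v = q1 -> p2 ∘ v = q2 -> v = pb_pair q1 q2 E.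
Proof. apply (choose_spec (proj2 H q q1 q2 E)). Qed.

Lemma pb_square : f ∘ p1 = g ∘ p2.
Proof. exact (proj1 H). Qed.

Lemma pb_ext {q} (u v : Hom q p) : p1 ∘ u = p1 ∘ v -> p2 ∘ u = p2 ∘ v -> u = v.
Proof.
  intros E1 E2.
  assert (E : f ∘ (p1 ∘ v) = g ∘ (p2 ∘ v)) by (rewrite !comp_assoc, pb_square; reflexivity).
  rewrite (pb_pair_unique _ _ E u E1 E2); symmetry; apply pb_pair_unique; reflexivity.
Qed.

Lemma pullback_mono : mono g -> mono p1.
Proof.
  intros Hg z u v E. apply pb_ext; [exact E|]. apply Hg.
  rewrite !comp_assoc, <- pb_square, <- !comp_assoc, E; reflexivity.
Qed.
End Pullback.

Section Product.
Context {a b p : C} {p1 : Hom p a} {p2 : Hom p b} (H : is_product p1 p2).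

Definition prod_pair {q : C} (q1 : Hom q a) (q2 : Hom q b) : Hom q p := choose (H q q1 q2).

Lemma prod_pair_fst {q} (q1 : Hom q a) q2 : p1 ∘ prod_pair q1 q2 = q1.
Proof. apply (choose_spec (H q q1 q2)). Qed.

Lemma prod_pair_snd {q} (q1 : Hom q a) q2 : p2 ∘ prod_pair q1 q2 = q2.
Proof. apply (choose_spec (H q q1 q2)). Qed.

Lemma prod_pair_unique {q} (q1 : Hom q a) q2 (v : Hom q p) :
  p1 ∘ v = q1 -> p2 ∘ v = q2 -> v = prod_pair q1 q2.
Proof. apply (choose_spec (H q q1 q2)). Qed.

Lemma prod_ext {q} (u v : Hom q p) : p1 ∘ u = p1 ∘ v -> p2 ∘ u = p2 ∘ v -> u = v.
Proof.
  intros E1 E2. rewrite (prod_pair_unique _ _ u E1 E2); symmetry; apply prod_pair_unique; reflexivity.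
Qed.

Lemma prod_pair_comp {q r} (q1 : Hom q a) q2 (k : Hom r q) :
  prod_pair q1 q2 ∘ k = prod_pair (q1 ∘ k) (q2 ∘ k).
Proof.
  apply prod_pair_unique; rewrite comp_assoc; [rewrite prod_pair_fst|rewrite prod_pair_snd];
    reflexivity.
Qed.
End Product.

Lemma pullback_over_terminal_is_product {t a b p : C} (Ht : is_terminal t)
    {f : Hom a t} {g : Hom b t} {p1 : Hom p a} {p2 : Hom p b} :
  is_pullback f g p p1 p2 -> is_product p1 p2.
Proof.
  intros H q q1 q2. destruct (proj2 H q q1 q2 (terminal_unique Ht _ _)) as [u Hu].
  exists u; exact Hu.
Qed.

Lemma kernel_pair_legs_eq {u x p : C} {m : Hom u x} {p1 p2 : Hom p u} :
  mono m -> is_pullback m m p p1 p2 -> p1 = p2.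
Proof. intros Hm H; apply Hm, (pb_square H). Qed.

Lemma mono_of_kernel_pair {u x p : C} {m : Hom u x} {p1 p2 : Hom p u} :
  is_pullback m m p p1 p2 -> p1 = p2 -> mono m.
Proof.
  intros H E z f g Efg.
  destruct (proj2 H z f g Efg) as [w [W1 [W2 _]]]; rewrite <- W1, <- W2, E; reflexivity.
Qed.

Lemma exponential_intro {a b e p : C} (p1 : Hom p e) (p2 : Hom p a) (ev : Hom p b) :
  is_product p1 p2 ->
  (forall x, exists q (q1 : Hom q x) (q2 : Hom q a), is_product q1 q2 /\
     forall f : Hom q b, exists g : Hom x e,
       (forall m, p1 ∘ m = g ∘ q1 -> p2 ∘ m = q2 -> ev ∘ m = f) /\
       (forall g' m, p1 ∘ m = g' ∘ q1 -> p2 ∘ m = q2 -> ev ∘ m = f -> g' = g)) ->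
  is_exponential p1 p2 ev.
Proof.
  intros Hp Hx. split; [exact Hp|].
  intros x q' q1' q2' Hq' f'. destruct (Hx x) as [q [q1 [q2 [Hq Hf]]]].
  set (phi := prod_pair Hq' q1 q2). set (psi := prod_pair Hq q1' q2').
  assert (phi_psi : phi ∘ psi = idm _).
  { apply (prod_ext Hq'); rewrite comp_assoc, comp_id_r; unfold phi, psi;
      rewrite ?prod_pair_fst, ?prod_pair_snd; auto. }
  assert (psi_phi : psi ∘ phi = idm _).
  { apply (prod_ext Hq); rewrite comp_assoc, comp_id_r; unfold phi, psi;
      rewrite ?prod_pair_fst, ?prod_pair_snd; auto. }
  destruct (Hf (f' ∘ phi)) as [g [Pg Ug]]. exists g; split.
  - intros m' M1 M2.
    assert (E : ev ∘ (m' ∘ phi) = f' ∘ phi).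
    { apply Pg; rewrite comp_assoc; [rewrite M1, <- comp_assoc|rewrite M2]; unfold phi;
        rewrite ?prod_pair_fst, ?prod_pair_snd; auto. }
    transitivity (ev ∘ (m' ∘ phi) ∘ psi).
    + rewrite <- !comp_assoc, phi_psi, comp_id_r; reflexivity.
    + rewrite E, <- comp_assoc, phi_psi, comp_id_r; reflexivity.
  - intros g' Pg'.
    set (m := prod_pair Hp (g' ∘ q1) q2).
    apply (Ug g' m); unfold m; [apply prod_pair_fst|apply prod_pair_snd|].
    assert (E : ev ∘ (m ∘ psi) = f').
    { apply Pg'; rewrite comp_assoc; unfold m;
        [rewrite prod_pair_fst, <- comp_assoc|rewrite prod_pair_snd];
        unfold psi; rewrite ?prod_pair_fst, ?prod_pair_snd; reflexivity. }
    rewrite <- E, <- !comp_assoc, psi_phi, comp_id_r; reflexivity.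
Qed.

Lemma exponential_transfer {a b e p p' : C} {p1 : Hom p e} {p2 : Hom p a} {ev : Hom p b}
    (H : is_exponential p1 p2 ev) {p1' : Hom p' e} {p2' : Hom p' a} (H' : is_product p1' p2') :
  is_exponential p1' p2' (ev ∘ prod_pair (proj1 H) p1' p2').
Proof.
  split; [exact H'|]. intros x q q1 q2 Hq f.
  destruct (proj2 H x q q1 q2 Hq f) as [g [Pg Ug]]. exists g; split.
  - intros m' M1 M2. rewrite <- comp_assoc.
    apply Pg; rewrite comp_assoc; [rewrite prod_pair_fst|rewrite prod_pair_snd]; assumption.
  - intros g' Pg'. apply Ug. intros m M1 M2.
    set (m' := prod_pair H' (p1 ∘ m) (p2 ∘ m)).
    assert (Em : prod_pair (proj1 H) p1' p2' ∘ m' = m).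
    { apply (prod_ext (proj1 H)); rewrite comp_assoc, ?prod_pair_fst, ?prod_pair_snd;
        unfold m'; rewrite ?prod_pair_fst, ?prod_pair_snd; reflexivity. }
    rewrite <- Em, comp_assoc.
    apply Pg'; unfold m'; rewrite ?prod_pair_fst, ?prod_pair_snd; assumption.
Qed.
End UniversalMaps.

Record FinLim (C : Category) := {
  one : C;
  to_one : forall x : C, Hom x one;
  to_one_unique : forall (x : C) (f : Hom x one), f = to_one x;
  pb_ob : forall a b c : C, Hom a c -> Hom b c -> C;
  pb_fst : forall a b c (f : Hom a c) (g : Hom b c), Hom (pb_ob a b c f g) a;
  pb_snd : forall a b c (f : Hom a c) (g : Hom b c), Hom (pb_ob a b c f g) b;
  pb_is_pullback : forall a b c (f : Hom a c) (g : Hom b c),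
    is_pullback f g (pb_ob a b c f g) (pb_fst a b c f g) (pb_snd a b c f g)
}.
Arguments one {C} F : rename.
Arguments to_one {C} F x : rename.
Arguments pb_ob {C} F {a b c} f g : rename.
Arguments pb_fst {C} F {a b c} f g : rename.
Arguments pb_snd {C} F {a b c} f g : rename.
Arguments pb_is_pullback {C} F {a b c} f g : rename.

Section Products.
Context {C : Category} (F : FinLim C).

Lemma one_terminal : is_terminal (one F).
Proof. intro x; exists (to_one F x); apply to_one_unique. Qed.

Lemma to_one_eq {x : C} (f g : Hom x (one F)) : f = g.
Proof. apply (terminal_unique one_terminal). Qed.

Definition prod_ob (a b : C) : C := pb_ob F (to_one F a) (to_one F b).
Definition prod_fst (a b : C) : Hom (prod_ob a b) a := pb_fst F _ _.
Definition prod_snd (a b : C) : Hom (prod_ob a b) b := pb_snd F _ _.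

Lemma prod_is_product (a b : C) : is_product (prod_fst a b) (prod_snd a b).
Proof. exact (pullback_over_terminal_is_product one_terminal (pb_is_pullback F _ _)). Qed.

Definition prod_map_l {z e : C} (g : Hom z e) (a : C) : Hom (prod_ob z a) (prod_ob e a) :=
  prod_pair (prod_is_product e a) (g ∘ prod_fst z a) (prod_snd z a).

Lemma prod_map_l_fst {z e : C} (g : Hom z e) (a : C) :
  prod_fst e a ∘ prod_map_l g a = g ∘ prod_fst z a.
Proof. apply prod_pair_fst. Qed.

Lemma prod_map_l_snd {z e : C} (g : Hom z e) (a : C) :
  prod_snd e a ∘ prod_map_l g a = prod_snd z a.
Proof. apply prod_pair_snd. Qed.

Lemma prod_map_l_comp {w z e : C} (g : Hom z e) (h : Hom w z) (a : C) :
  prod_map_l g a ∘ prod_map_l h a = prod_map_l (g ∘ h) a.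
Proof.
  apply (prod_ext (prod_is_product e a)); rewrite comp_assoc, ?prod_map_l_fst, ?prod_map_l_snd.
  - rewrite <- comp_assoc, prod_map_l_fst, comp_assoc; reflexivity.
  - reflexivity.
Qed.

Lemma comp_prod_map_l {w z e a b : C} (f : Hom (prod_ob e a) b) (g : Hom z e) (h : Hom w z) :
  f ∘ prod_map_l (g ∘ h) a = f ∘ prod_map_l g a ∘ prod_map_l h a.
Proof. rewrite <- comp_assoc, prod_map_l_comp; reflexivity. Qed.
End Products.

Record Topos (C : Category) := {
  lim :> FinLim C;
  exp_ob : C -> C -> C;
  eval : forall a b : C, Hom (prod_ob lim (exp_ob a b) a) b;
  eval_is_exponential : forall a b : C,
    is_exponential (prod_fst lim (exp_ob a b) a) (prod_snd lim (exp_ob a b) a) (eval a b);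
  Omega : C;
  truth : Hom (one lim) Omega;
  truth_classifies : forall (u x : C) (m : Hom u x), mono m ->
    exists chi : Hom x Omega, (forall k, is_pullback chi truth u m k) /\
      forall chi', (forall k, is_pullback chi' truth u m k) -> chi' = chi
}.
Arguments exp_ob {C} T a b : rename.
Arguments eval {C} T a b : rename.
Arguments eval_is_exponential {C} T a b : rename.
Arguments Omega {C} T : rename.
Arguments truth {C} T : rename.
Arguments truth_classifies {C} T {u x} m : rename.

Section ChosenStructure.
Context {C : Category} (HC : is_topos C).

Let Hpb := proj2 (proj1 HC).
Let Hexp := proj2 (proj1 (proj2 HC)).
(* The terminal object is the domain of the classifier's [truth], not the one from the
   finite-limit axiom. *)
Let t := choose (proj2 (proj2 HC)).
Let HOmega := choose_spec (proj2 (proj2 HC)).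
Let Om := choose HOmega.
Let Htruth := choose_spec HOmega.
Let tr := choose Htruth.
Let Ht := proj1 (choose_spec Htruth).

Definition chosen_finlim : FinLim C := {|
  one := t;
  to_one x := choose (Ht x);
  to_one_unique x := choose_spec (Ht x);
  pb_fst a b c f g := choose (choose_spec (Hpb a b c f g));
  pb_snd a b c f g := choose (choose_spec (choose_spec (Hpb a b c f g)));
  pb_is_pullback a b c f g := choose_spec (choose_spec (choose_spec (Hpb a b c f g)))
|}.

Let exp_ex (a b : C) := choose_spec (choose_spec (choose_spec (choose_spec (Hexp a b)))).
Let exp_spec (a b : C) := choose_spec (exp_ex a b).

Definition chosen_topos : Topos C := {|
  lim := chosen_finlim;
  exp_ob a b := choose (Hexp a b);
  eval a b :=
    choose (exp_ex a b) ∘ prod_pair (proj1 (exp_spec a b)) (prod_fst _ _ _) (prod_snd _ _ _);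
  eval_is_exponential a b := exponential_transfer (exp_spec a b) (prod_is_product _ _ _);
  Omega := Om;
  truth := tr;
  truth_classifies := proj2 (choose_spec Htruth)
|}.
End ChosenStructure.

Section Equalizer.
Context {C : Category} (F : FinLim C) {y z : C} (f1 f2 : Hom y z).

Let Hzz := prod_is_product F z z.
Let diag : Hom z (prod_ob F z z) := prod_pair Hzz (idm z) (idm z).
Let pair12 : Hom y (prod_ob F z z) := prod_pair Hzz f1 f2.
Let Heq := pb_is_pullback F pair12 diag.

Definition equalizer_ob : C := pb_ob F pair12 diag.
Definition equalizer_incl : Hom equalizer_ob y := pb_fst F pair12 diag.

Lemma equalizer_snd_eq :
  f1 ∘ equalizer_incl = pb_snd F pair12 diag /\ f2 ∘ equalizer_incl = pb_snd F pair12 diag.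
Proof.
  pose proof (pb_square Heq) as E.
  split; [apply (f_equal (fun k => prod_fst F z z ∘ k)) in E
         |apply (f_equal (fun k => prod_snd F z z ∘ k)) in E];
    unfold pair12, diag in E;
    rewrite !comp_assoc, ?prod_pair_fst, ?prod_pair_snd, comp_id_l in E; exact E.
Qed.

Lemma equalizer_eq : f1 ∘ equalizer_incl = f2 ∘ equalizer_incl.
Proof. destruct equalizer_snd_eq as [E1 E2]; rewrite E1, E2; reflexivity. Qed.

Lemma equalizer_mono : mono equalizer_incl.
Proof.
  intros w u v E. apply (pb_ext Heq); [exact E|].
  rewrite <- (proj1 equalizer_snd_eq), <- !comp_assoc, E; reflexivity.
Qed.

Lemma equalizer_factor {w} (h : Hom w y) : f1 ∘ h = f2 ∘ h -> exists j, equalizer_incl ∘ j = h.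
Proof.
  intro E. assert (E' : pair12 ∘ h = diag ∘ (f1 ∘ h)).
  { apply (prod_ext Hzz); unfold pair12, diag;
      rewrite !comp_assoc, ?prod_pair_fst, ?prod_pair_snd, comp_id_l; auto. }
  exists (pb_pair Heq h (f1 ∘ h) E'). apply pb_pair_fst.
Qed.

Definition equalizer_lift {w} (h : Hom w y) (E : f1 ∘ h = f2 ∘ h) : Hom w equalizer_ob :=
  choose (equalizer_factor h E).

Lemma equalizer_lift_incl {w} (h : Hom w y) E : equalizer_incl ∘ equalizer_lift h E = h.
Proof. apply (choose_spec (equalizer_factor h E)). Qed.
End Equalizer.

Section ToposFacts.
Context {C : Category} (T : Topos C).

Section Exponential.
Context {a b : C}.
Let HE := proj2 (eval_is_exponential T a b).

Definition curry {z : C} (f : Hom (prod_ob T z a) b) : Hom z (exp_ob T a b) :=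
  choose (HE z _ _ _ (prod_is_product T z a) f).

Lemma eval_curry {z} (f : Hom (prod_ob T z a) b) : eval T a b ∘ prod_map_l T (curry f) a = f.
Proof.
  apply (proj1 (choose_spec (HE z _ _ _ (prod_is_product T z a) f)));
    [apply prod_map_l_fst|apply prod_map_l_snd].
Qed.

Lemma curry_unique {z} (f : Hom (prod_ob T z a) b) (g : Hom z (exp_ob T a b)) :
  eval T a b ∘ prod_map_l T g a = f -> g = curry f.
Proof.
  intro E. apply (proj2 (choose_spec (HE z _ _ _ (prod_is_product T z a) f))).
  intros m M1 M2. rewrite <- E. f_equal. apply (prod_pair_unique _ _ _ _ M1 M2).
Qed.
End Exponential.

Definition holds {z x : C} (chi : Hom x (Omega T)) (k : Hom z x) : Prop :=
  chi ∘ k = truth T ∘ to_one T z.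

Lemma holds_comp {z w x : C} (chi : Hom x (Omega T)) (k : Hom z x) (h : Hom w z) :
  holds chi k -> holds chi (k ∘ h).
Proof. unfold holds; intro E. rewrite comp_assoc, E, <- comp_assoc. f_equal; apply to_one_eq. Qed.

Lemma holds_assoc {w x y : C} (f : Hom y (Omega T)) (g : Hom x y) (k : Hom w x) :
  holds (f ∘ g) k <-> holds f (g ∘ k).
Proof. unfold holds; rewrite comp_assoc; reflexivity. Qed.

Section Characteristic.
Context {u x : C} {m : Hom u x} (Hm : mono m).

Definition char : Hom x (Omega T) := choose (truth_classifies T m Hm).

Lemma char_pullback k : is_pullback char (truth T) u m k.
Proof. apply (choose_spec (truth_classifies T m Hm)). Qed.

Lemma char_unique chi : (forall k, is_pullback chi (truth T) u m k) -> chi = char.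
Proof. apply (choose_spec (truth_classifies T m Hm)). Qed.

Lemma holds_char_mono : holds char m.
Proof. exact (pb_square (char_pullback (to_one T u))). Qed.

Definition char_factor {z} (k : Hom z x) (E : holds char k) : Hom z u :=
  pb_pair (char_pullback (to_one T u)) k (to_one T z) E.

Lemma char_factor_spec {z} (k : Hom z x) E : m ∘ char_factor k E = k.
Proof. apply pb_pair_fst. Qed.

Lemma holds_char_iff {z} (k : Hom z x) : holds char k <-> exists j, m ∘ j = k.
Proof.
  split.
  - intro E; exists (char_factor k E); apply char_factor_spec.
  - intros [j <-]. apply holds_comp, holds_char_mono.
Qed.
End Characteristic.

Lemma Omega_ext {x : C} (chi1 chi2 : Hom x (Omega T)) :
  (forall z (k : Hom z x), holds chi1 k <-> holds chi2 k) -> chi1 = chi2.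
Proof.
  (* Both maps classify the pullback [s] of [truth] along [chi1]. *)
  pose proof (pb_is_pullback T chi1 (truth T)) as HP.
  set (s := pb_fst T chi1 (truth T)) in *.
  assert (Ms : mono s) by exact (pullback_mono HP (mono_from_terminal (one_terminal T) _)).
  assert (G : forall chi, (forall z (k : Hom z x), holds chi1 k <-> holds chi k) ->
              forall k, is_pullback chi (truth T) _ s k).
  { intros chi Hc k. replace k with (pb_snd T chi1 (truth T)) by apply to_one_eq. split.
    - assert (E : holds chi1 s).
      { unfold holds. rewrite (pb_square HP). f_equal; apply to_one_eq. }
      apply Hc in E. unfold holds in E; rewrite E; f_equal; apply to_one_eq.
    - intros q q1 q2 E.
      assert (E' : holds chi q1) by (unfold holds; rewrite E; f_equal; apply to_one_eq).
      apply Hc in E'.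
      assert (E2 : chi1 ∘ q1 = truth T ∘ q2) by (rewrite E'; f_equal; apply to_one_eq).
      exists (pb_pair HP q1 q2 E2). split; [apply pb_pair_fst|split; [apply pb_pair_snd|]].
      intros v V1 V2. apply pb_pair_unique; auto. }
  intro Hk.
  rewrite (char_unique Ms chi1 (G chi1 (fun _ _ => iff_refl _))).
  symmetry. apply char_unique, G, Hk.
Qed.

Let HOO := prod_is_product T (Omega T) (Omega T).

Definition and_Omega : Hom (prod_ob T (Omega T) (Omega T)) (Omega T) :=
  char (mono_from_terminal (one_terminal T) (prod_pair HOO (truth T) (truth T))).

Lemma holds_and_Omega {z} (h : Hom z (prod_ob T (Omega T) (Omega T))) :
  holds and_Omega h <-> holds (prod_fst T _ _) h /\ holds (prod_snd T _ _) h.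
Proof.
  unfold and_Omega. rewrite holds_char_iff. split.
  - intros [j <-]. unfold holds. rewrite !comp_assoc, prod_pair_fst, prod_pair_snd.
    split; f_equal; apply to_one_eq.
  - intros [E1 E2]. exists (to_one T z). apply (prod_ext HOO);
      rewrite comp_assoc; [rewrite prod_pair_fst|rewrite prod_pair_snd]; symmetry; assumption.
Qed.

Definition Omega_le {c : C} (phi psi : Hom c (Omega T)) : Prop :=
  forall w (k : Hom w c), holds phi k -> holds psi k.

Lemma and_Omega_eq_fst_iff {c : C} (phi psi : Hom c (Omega T)) :
  and_Omega ∘ prod_pair HOO phi psi = phi <-> Omega_le phi psi.
Proof.
  assert (E : forall w (k : Hom w c),
    holds (and_Omega ∘ prod_pair HOO phi psi) k <-> holds phi k /\ holds psi k).
  { intros w k. rewrite holds_assoc, holds_and_Omega, <- !holds_assoc,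
      prod_pair_fst, prod_pair_snd; reflexivity. }
  split.
  - intros Heq w k Hk. rewrite <- Heq in Hk. apply E in Hk. apply Hk.
  - intro Hle. apply Omega_ext. intros w k. rewrite E. split; [tauto|auto].
Qed.
End ToposFacts.

Section StructuredCospans.
Variables (A X : Category) (L : Functor A X) (R : Functor X A)
  (eta : forall a : A, Hom a (R (L a))) (eps : forall x : X, Hom (L (R x)) x).
Hypotheses
  (eta_natural : forall (a a' : A) (f : Hom a a'), eta a' ∘ f = fmap R (fmap L f) ∘ eta a)
  (eps_natural : forall (x x' : X) (g : Hom x x'), g ∘ eps x = eps x' ∘ fmap L (fmap R g))
  (triangle_L : forall a : A, eps (L a) ∘ fmap L (eta a) = idm (L a))
  (triangle_R : forall x : X, fmap R (eps x) ∘ eta (R x) = idm (R x)).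

(** * Transposition along the adjunction *)

Definition transpose {a : A} {x : X} (l : Hom (L a) x) : Hom a (R x) := fmap R l ∘ eta a.
Definition untranspose {a : A} {x : X} (k : Hom a (R x)) : Hom (L a) x := eps x ∘ fmap L k.

Lemma transpose_untranspose {a x} (k : Hom a (R x)) : transpose (untranspose k) = k.
Proof.
  unfold transpose, untranspose.
  rewrite fmap_comp, <- comp_assoc, <- eta_natural, comp_assoc, triangle_R, comp_id_l.
  reflexivity.
Qed.

Lemma untranspose_transpose {a x} (l : Hom (L a) x) : untranspose (transpose l) = l.
Proof.
  unfold transpose, untranspose.
  rewrite fmap_comp, comp_assoc, <- eps_natural, <- comp_assoc, triangle_L, comp_id_r.
  reflexivity.
Qed.

Lemma transpose_inj {a x} (l l' : Hom (L a) x) : transpose l = transpose l' -> l = l'.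
Proof.
  intro E. rewrite <- (untranspose_transpose l), <- (untranspose_transpose l'), E. reflexivity.
Qed.

Lemma transpose_post {a x y} (g : Hom x y) (l : Hom (L a) x) :
  transpose (g ∘ l) = fmap R g ∘ transpose l.
Proof. unfold transpose. rewrite fmap_comp, comp_assoc. reflexivity. Qed.

Lemma transpose_pre {a b x} (l : Hom (L b) x) (f : Hom a b) :
  transpose (l ∘ fmap L f) = transpose l ∘ f.
Proof. unfold transpose. rewrite fmap_comp, <- !comp_assoc, eta_natural. reflexivity. Qed.

Lemma untranspose_post {a x y} (g : Hom x y) (k : Hom a (R x)) :
  untranspose (fmap R g ∘ k) = g ∘ untranspose k.
Proof.
  apply transpose_inj. rewrite transpose_post, !transpose_untranspose. reflexivity.
Qed.

Lemma square_transpose {a b x y} (g : Hom x y) (l : Hom (L a) x) (l' : Hom (L b) y) (f : Hom a b) :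
  g ∘ l = l' ∘ fmap L f <-> fmap R g ∘ transpose l = transpose l' ∘ f.
Proof.
  split; intro E.
  - rewrite <- transpose_post, <- transpose_pre, E; reflexivity.
  - apply transpose_inj. rewrite transpose_post, transpose_pre; exact E.
Qed.

Lemma R_terminal {t : X} : is_terminal t -> is_terminal (R t).
Proof.
  intros Ht a. destruct (Ht (L a)) as [h _]. exists (transpose h). intro g.
  rewrite <- (transpose_untranspose g). f_equal. apply (terminal_unique Ht).
Qed.

Lemma R_pullback {a b c p : X} {f : Hom a c} {g : Hom b c} {p1 : Hom p a} {p2 : Hom p b} :
  is_pullback f g p p1 p2 -> is_pullback (fmap R f) (fmap R g) (R p) (fmap R p1) (fmap R p2).
Proof.
  intros H. split.
  - rewrite <- !fmap_comp, (pb_square H); reflexivity.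
  - intros q q1 q2 E.
    assert (E' : f ∘ untranspose q1 = g ∘ untranspose q2)
      by (rewrite <- !untranspose_post, E; reflexivity).
    exists (transpose (pb_pair H _ _ E')). split; [|split].
    + rewrite <- transpose_post, pb_pair_fst, transpose_untranspose; reflexivity.
    + rewrite <- transpose_post, pb_pair_snd, transpose_untranspose; reflexivity.
    + intros v V1 V2. rewrite <- (transpose_untranspose v). f_equal.
      apply pb_pair_unique; rewrite <- untranspose_post; [rewrite V1|rewrite V2]; reflexivity.
Qed.

Lemma R_mono {x y : X} (m : Hom x y) : mono m -> mono (fmap R m).
Proof.
  intros Hm z f g E. rewrite <- (transpose_untranspose f), <- (transpose_untranspose g).
  f_equal. apply Hm. rewrite <- !untranspose_post, E. reflexivity.
Qed.

Variables (TA : Topos A) (TX : Topos X).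

Lemma R_one_terminal : is_terminal (R (one TX)).
Proof. exact (R_terminal (one_terminal TX)). Qed.

Definition to_R_one (a : A) : Hom a (R (one TX)) := transpose (to_one TX (L a)).

Lemma to_R_one_eq {a : A} (f g : Hom a (R (one TX))) : f = g.
Proof. exact (terminal_unique R_one_terminal f g). Qed.

Lemma R_mono_from_one {y : X} (m : Hom (one TX) y) : mono (fmap R m).
Proof. exact (mono_from_terminal R_one_terminal _). Qed.

Definition R_prod_pair {c : A} {z w : X} (k1 : Hom c (R z)) (k2 : Hom c (R w)) :
  Hom c (R (prod_ob TX z w)) :=
  pb_pair (R_pullback (pb_is_pullback TX (to_one TX z) (to_one TX w))) k1 k2 (to_R_one_eq _ _).

Lemma R_prod_pair_fst {c z w} (k1 : Hom c (R z)) (k2 : Hom c (R w)) :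
  fmap R (prod_fst TX z w) ∘ R_prod_pair k1 k2 = k1.
Proof. apply pb_pair_fst. Qed.

Lemma R_prod_pair_snd {c z w} (k1 : Hom c (R z)) (k2 : Hom c (R w)) :
  fmap R (prod_snd TX z w) ∘ R_prod_pair k1 k2 = k2.
Proof. apply pb_pair_snd. Qed.

Lemma R_prod_ext {c z w} (u v : Hom c (R (prod_ob TX z w))) :
  fmap R (prod_fst TX z w) ∘ u = fmap R (prod_fst TX z w) ∘ v ->
  fmap R (prod_snd TX z w) ∘ u = fmap R (prod_snd TX z w) ∘ v -> u = v.
Proof. apply (pb_ext (R_pullback (pb_is_pullback TX _ _))). Qed.

(** * Finite limits of structured cospans *)

Local Notation SC := (StrCsp L).

Definition sc_alpha (c : SCObj L) : Hom (sc_a c) (R (sc_x c)) := transpose (sc_l c).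
Definition sc_beta (c : SCObj L) : Hom (sc_b c) (R (sc_x c)) := transpose (sc_r c).

Lemma sc_alpha_natural {c d : SCObj L} (u : SCHom c d) :
  fmap R (sc_g u) ∘ sc_alpha c = sc_alpha d ∘ sc_f u.
Proof. apply square_transpose, sc_sql. Qed.

Lemma sc_beta_natural {c d : SCObj L} (u : SCHom c d) :
  fmap R (sc_g u) ∘ sc_beta c = sc_beta d ∘ sc_h u.
Proof. apply square_transpose, sc_sqr. Qed.

Definition cospan_of (a b : A) (x : X) (alpha : Hom a (R x)) (beta : Hom b (R x)) : SCObj L :=
  Build_SCObj L a b x (untranspose alpha) (untranspose beta).

Lemma sc_alpha_cospan_of a b x alpha beta : sc_alpha (cospan_of a b x alpha beta) = alpha.
Proof. apply transpose_untranspose. Qed.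

Lemma sc_beta_cospan_of a b x alpha beta : sc_beta (cospan_of a b x alpha beta) = beta.
Proof. apply transpose_untranspose. Qed.

Definition cospan_hom_of (c d : SCObj L) f g h
    (E1 : fmap R g ∘ sc_alpha c = sc_alpha d ∘ f) (E2 : fmap R g ∘ sc_beta c = sc_beta d ∘ h) :
  SCHom c d :=
  Build_SCHom c d f g h (proj2 (square_transpose _ _ _ _) E1) (proj2 (square_transpose _ _ _ _) E2).

Lemma SCHom_components {c d : SCObj L} {u v : SCHom c d} :
  u = v -> sc_f u = sc_f v /\ sc_g u = sc_g v /\ sc_h u = sc_h v.
Proof. intros ->; auto. Qed.

Definition sc_one : SCObj L :=
  cospan_of (one TA) (one TA) (one TX) (to_R_one _) (to_R_one _).

Definition sc_to_one (c : SCObj L) : SCHom c sc_one :=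
  cospan_hom_of c sc_one (to_one TA _) (to_one TX _) (to_one TA _)
    (to_R_one_eq _ _) (to_R_one_eq _ _).

Lemma sc_to_one_eq {c : SCObj L} (f g : SCHom c sc_one) : f = g.
Proof. apply SCHom_eq; apply to_one_eq. Qed.

Lemma sc_one_terminal : is_terminal (C:=SC) sc_one.
Proof. intro c. exists (sc_to_one c). intro g. apply sc_to_one_eq. Qed.

Section PullbackSide.
Context {x1 x2 x3 : X} (fx : Hom x1 x3) (gx : Hom x2 x3)
  {a1 a2 a3 : A} {fa : Hom a1 a3} {ga : Hom a2 a3}
  {alpha1 : Hom a1 (R x1)} {alpha2 : Hom a2 (R x2)} {alpha3 : Hom a3 (R x3)}
  (Ef : fmap R fx ∘ alpha1 = alpha3 ∘ fa) (Eg : fmap R gx ∘ alpha2 = alpha3 ∘ ga).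

Let HRX := R_pullback (pb_is_pullback TX fx gx).

Lemma pb_side_square :
  fmap R fx ∘ (alpha1 ∘ pb_fst TA fa ga) = fmap R gx ∘ (alpha2 ∘ pb_snd TA fa ga).
Proof.
  rewrite !comp_assoc, Ef, Eg, <- !comp_assoc, (pb_square (pb_is_pullback TA fa ga)).
  reflexivity.
Qed.

Definition pb_side : Hom (pb_ob TA fa ga) (R (pb_ob TX fx gx)) := pb_pair HRX _ _ pb_side_square.

Lemma pb_side_pair {xq aq} (alphaq : Hom aq (R xq)) (ux : Hom xq (pb_ob TX fx gx))
    (r1 : Hom aq a1) (r2 : Hom aq a2) (E : fa ∘ r1 = ga ∘ r2) :
  fmap R (pb_fst TX fx gx ∘ ux) ∘ alphaq = alpha1 ∘ r1 ->
  fmap R (pb_snd TX fx gx ∘ ux) ∘ alphaq = alpha2 ∘ r2 ->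
  fmap R ux ∘ alphaq = pb_side ∘ pb_pair (pb_is_pullback TA fa ga) r1 r2 E.
Proof.
  intros E1 E2. apply (pb_ext HRX); unfold pb_side;
    rewrite !comp_assoc, <- fmap_comp, ?pb_pair_fst, ?pb_pair_snd, <- comp_assoc,
      ?pb_pair_fst, ?pb_pair_snd; assumption.
Qed.
End PullbackSide.

Section SCPullback.
Context {c1 c2 c3 : SCObj L} (f : SCHom c1 c3) (g : SCHom c2 c3).

Definition sc_pb : SCObj L :=
  cospan_of (pb_ob TA (sc_f f) (sc_f g)) (pb_ob TA (sc_h f) (sc_h g)) (pb_ob TX (sc_g f) (sc_g g))
    (pb_side _ _ (sc_alpha_natural f) (sc_alpha_natural g))
    (pb_side _ _ (sc_beta_natural f) (sc_beta_natural g)).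

Definition sc_pb_fst : SCHom sc_pb c1.
Proof.
  refine (cospan_hom_of sc_pb c1 (pb_fst TA _ _) (pb_fst TX _ _) (pb_fst TA _ _) _ _);
    unfold sc_pb; rewrite ?sc_alpha_cospan_of, ?sc_beta_cospan_of; apply pb_pair_fst.
Defined.

Definition sc_pb_snd : SCHom sc_pb c2.
Proof.
  refine (cospan_hom_of sc_pb c2 (pb_snd TA _ _) (pb_snd TX _ _) (pb_snd TA _ _) _ _);
    unfold sc_pb; rewrite ?sc_alpha_cospan_of, ?sc_beta_cospan_of; apply pb_pair_snd.
Defined.

Lemma sc_pb_is_pullback : is_pullback (C:=SC) f g sc_pb sc_pb_fst sc_pb_snd.
Proof.
  split.
  - apply SCHom_eq; apply pb_square, pb_is_pullback.
  - intros q q1 q2 E. destruct (SCHom_components E) as [Ea [Ex Eb]].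
    set (ua := pb_pair (pb_is_pullback TA _ _) _ _ Ea).
    set (ux := pb_pair (pb_is_pullback TX _ _) _ _ Ex).
    set (ub := pb_pair (pb_is_pullback TA _ _) _ _ Eb).
    assert (S1 : fmap R ux ∘ sc_alpha q = sc_alpha sc_pb ∘ ua).
    { unfold sc_pb; rewrite sc_alpha_cospan_of. apply pb_side_pair; unfold ux;
        rewrite ?pb_pair_fst, ?pb_pair_snd; apply sc_alpha_natural. }
    assert (S2 : fmap R ux ∘ sc_beta q = sc_beta sc_pb ∘ ub).
    { unfold sc_pb; rewrite sc_beta_cospan_of. apply pb_side_pair; unfold ux;
        rewrite ?pb_pair_fst, ?pb_pair_snd; apply sc_beta_natural. }
    exists (cospan_hom_of q sc_pb ua ux ub S1 S2). split; [|split].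
    + apply SCHom_eq; apply pb_pair_fst.
    + apply SCHom_eq; apply pb_pair_snd.
    + intros v V1 V2.
      destruct (SCHom_components V1) as [Va1 [Vx1 Vb1]], (SCHom_components V2) as [Va2 [Vx2 Vb2]].
      apply SCHom_eq; apply pb_pair_unique; assumption.
Qed.
End SCPullback.

Local Notation sc_prod c d := (sc_pb (sc_to_one c) (sc_to_one d)).
Local Notation sc_prod_fst c d := (sc_pb_fst (sc_to_one c) (sc_to_one d)).
Local Notation sc_prod_snd c d := (sc_pb_snd (sc_to_one c) (sc_to_one d)).

Lemma sc_prod_is_product (c d : SCObj L) : is_product (C:=SC) (sc_prod_fst c d) (sc_prod_snd c d).
Proof. exact (pullback_over_terminal_is_product sc_one_terminal (sc_pb_is_pullback _ _)). Qed.

Lemma sc_mono_components {c d : SCObj L} (m : SCHom c d) :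
  mono (C:=SC) m -> mono (sc_f m) /\ mono (sc_g m) /\ mono (sc_h m).
Proof.
  (* A mono has a trivial kernel pair, and kernel pairs are computed componentwise. *)
  intro Hm. destruct (SCHom_components (kernel_pair_legs_eq Hm (sc_pb_is_pullback m m)))
    as [Ea [Ex Eb]].
  split; [|split]; [exact (mono_of_kernel_pair (pb_is_pullback TA _ _) Ea)
                   |exact (mono_of_kernel_pair (pb_is_pullback TX _ _) Ex)
                   |exact (mono_of_kernel_pair (pb_is_pullback TA _ _) Eb)].
Qed.

(** * Exponentials *)

Section ExponentialSide.
Context {x y : X} {a a' : A} (alpha : Hom a (R x)) (alpha' : Hom a' (R y)).

Local Notation E := (exp_ob TX x y).
Local Notation prod_map_A := (prod_map_l TA).

Definition exp_post : Hom (exp_ob TA a a') (exp_ob TA a (R y)) := curry TA (alpha' ∘ eval TA a a').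

Definition exp_rho : Hom (prod_ob TA (R E) a) (R (prod_ob TX E x)) :=
  R_prod_pair (prod_fst TA _ _) (alpha ∘ prod_snd TA _ _).

Definition exp_restrict : Hom (R E) (exp_ob TA a (R y)) :=
  curry TA (fmap R (eval TX x y) ∘ exp_rho).

Definition exp_side_ob : A := pb_ob TA exp_post exp_restrict.
Definition exp_side_map : Hom exp_side_ob (R E) := pb_snd TA exp_post exp_restrict.
Definition exp_side_eval : Hom (prod_ob TA exp_side_ob a) a' :=
  eval TA a a' ∘ prod_map_A (pb_fst TA exp_post exp_restrict) a.

Let HE := pb_is_pullback TA exp_post exp_restrict.

Lemma exp_post_eval : eval TA a (R y) ∘ prod_map_A exp_post a = alpha' ∘ eval TA a a'.
Proof. apply eval_curry. Qed.

Lemma exp_restrict_eval :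
  eval TA a (R y) ∘ prod_map_A exp_restrict a = fmap R (eval TX x y) ∘ exp_rho.
Proof. apply eval_curry. Qed.

Lemma exp_rho_characterization {c} (zeta : Hom c (R E))
    (rho : Hom (prod_ob TA c a) (R (prod_ob TX E x))) :
  fmap R (prod_fst TX E x) ∘ rho = zeta ∘ prod_fst TA c a ->
  fmap R (prod_snd TX E x) ∘ rho = alpha ∘ prod_snd TA c a ->
  rho = exp_rho ∘ prod_map_A zeta a.
Proof.
  intros E1 E2. apply R_prod_ext; unfold exp_rho;
    rewrite comp_assoc, ?R_prod_pair_fst, ?R_prod_pair_snd, <- ?comp_assoc,
      ?prod_map_l_fst, ?prod_map_l_snd; assumption.
Qed.

Lemma exp_side_eval_square (rho : Hom (prod_ob TA exp_side_ob a) (R (prod_ob TX E x))) :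
  fmap R (prod_fst TX E x) ∘ rho = exp_side_map ∘ prod_fst TA _ a ->
  fmap R (prod_snd TX E x) ∘ rho = alpha ∘ prod_snd TA _ a ->
  fmap R (eval TX x y) ∘ rho = alpha' ∘ exp_side_eval.
Proof.
  intros E1 E2. rewrite (exp_rho_characterization _ _ E1 E2), comp_assoc.
  rewrite <- exp_restrict_eval, <- comp_prod_map_l.
  unfold exp_side_map, exp_side_ob; rewrite <- (pb_square HE), comp_prod_map_l, exp_post_eval.
  rewrite <- comp_assoc; reflexivity.
Qed.

Lemma exp_side_lift {z : X} {c : A} (zeta : Hom c (R z)) (gx : Hom z E)
    (fa : Hom (prod_ob TA c a) a') (rho : Hom (prod_ob TA c a) (R (prod_ob TX z x))) :
  fmap R (prod_fst TX z x) ∘ rho = zeta ∘ prod_fst TA c a ->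
  fmap R (prod_snd TX z x) ∘ rho = alpha ∘ prod_snd TA c a ->
  fmap R (eval TX x y ∘ prod_map_l TX gx x) ∘ rho = alpha' ∘ fa ->
  exists g : Hom c exp_side_ob,
    exp_side_map ∘ g = fmap R gx ∘ zeta /\ exp_side_eval ∘ prod_map_A g a = fa.
Proof.
  intros E1 E2 Hyp.
  assert (Erho : fmap R (prod_map_l TX gx x) ∘ rho = exp_rho ∘ prod_map_A (fmap R gx ∘ zeta) a).
  { apply exp_rho_characterization; rewrite comp_assoc, <- fmap_comp.
    - rewrite prod_map_l_fst, fmap_comp, <- comp_assoc, E1, comp_assoc; reflexivity.
    - rewrite prod_map_l_snd; exact E2. }
  assert (Hsq : exp_post ∘ curry TA fa = exp_restrict ∘ (fmap R gx ∘ zeta)).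
  { transitivity (curry TA (alpha' ∘ fa)); [|symmetry]; apply curry_unique.
    - rewrite comp_prod_map_l, exp_post_eval, <- comp_assoc, eval_curry; reflexivity.
    - rewrite comp_prod_map_l, exp_restrict_eval, <- comp_assoc, <- Erho,
        comp_assoc, <- fmap_comp; exact Hyp. }
  exists (pb_pair HE _ _ Hsq). split; [apply pb_pair_snd|].
  unfold exp_side_eval; rewrite <- comp_assoc, prod_map_l_comp, pb_pair_fst. apply eval_curry.
Qed.

Lemma exp_side_unique {c : A} (g g' : Hom c exp_side_ob) :
  exp_side_map ∘ g = exp_side_map ∘ g' ->
  exp_side_eval ∘ prod_map_A g a = exp_side_eval ∘ prod_map_A g' a -> g = g'.
Proof.
  intros Ek Ev. apply (pb_ext HE); [|exact Ek].
  rewrite (curry_unique TA _ (pb_fst TA _ _ ∘ g) eq_refl),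
    (curry_unique TA _ (pb_fst TA _ _ ∘ g') eq_refl), !comp_prod_map_l.
  unfold exp_side_eval, exp_side_ob in Ev; rewrite Ev; reflexivity.
Qed.
End ExponentialSide.

Lemma sc_prod_alpha_fst (c d : SCObj L) :
  fmap R (prod_fst TX (sc_x c) (sc_x d)) ∘ sc_alpha (sc_prod c d) = sc_alpha c ∘ prod_fst TA _ _.
Proof. exact (sc_alpha_natural (sc_prod_fst c d)). Qed.

Lemma sc_prod_alpha_snd (c d : SCObj L) :
  fmap R (prod_snd TX (sc_x c) (sc_x d)) ∘ sc_alpha (sc_prod c d) = sc_alpha d ∘ prod_snd TA _ _.
Proof. exact (sc_alpha_natural (sc_prod_snd c d)). Qed.

Lemma sc_prod_beta_fst (c d : SCObj L) :
  fmap R (prod_fst TX (sc_x c) (sc_x d)) ∘ sc_beta (sc_prod c d) = sc_beta c ∘ prod_fst TA _ _.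
Proof. exact (sc_beta_natural (sc_prod_fst c d)). Qed.

Lemma sc_prod_beta_snd (c d : SCObj L) :
  fmap R (prod_snd TX (sc_x c) (sc_x d)) ∘ sc_beta (sc_prod c d) = sc_beta d ∘ prod_snd TA _ _.
Proof. exact (sc_beta_natural (sc_prod_snd c d)). Qed.

Lemma sc_prod_map_components {z e c : SCObj L} (g : SCHom z e)
    (m : SCHom (sc_prod z c) (sc_prod e c)) :
  comp (C:=SC) (sc_prod_fst e c) m = comp (C:=SC) g (sc_prod_fst z c) ->
  comp (C:=SC) (sc_prod_snd e c) m = sc_prod_snd z c ->
  sc_f m = prod_map_l TA (sc_f g) _ /\ sc_g m = prod_map_l TX (sc_g g) _ /\
  sc_h m = prod_map_l TA (sc_h g) _.
Proof.
  intros M1 M2.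
  destruct (SCHom_components M1) as [Ma1 [Mx1 Mb1]], (SCHom_components M2) as [Ma2 [Mx2 Mb2]].
  split; [|split]; apply prod_pair_unique; assumption.
Qed.

Section SCExponential.
Context (c d : SCObj L).

Definition sc_exp : SCObj L :=
  cospan_of (exp_side_ob (sc_alpha c) (sc_alpha d)) (exp_side_ob (sc_beta c) (sc_beta d))
    (exp_ob TX (sc_x c) (sc_x d)) (exp_side_map _ _) (exp_side_map _ _).

Definition sc_eval : SCHom (sc_prod sc_exp c) d.
Proof.
  refine (cospan_hom_of (sc_prod sc_exp c) d (exp_side_eval (sc_alpha c) (sc_alpha d)) (eval TX _ _)
                            (exp_side_eval (sc_beta c) (sc_beta d)) _ _);
    apply exp_side_eval_square.
  - etransitivity; [exact (sc_prod_alpha_fst sc_exp c)|].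
    unfold sc_exp; rewrite sc_alpha_cospan_of; reflexivity.
  - exact (sc_prod_alpha_snd sc_exp c).
  - etransitivity; [exact (sc_prod_beta_fst sc_exp c)|].
    unfold sc_exp; rewrite sc_beta_cospan_of; reflexivity.
  - exact (sc_prod_beta_snd sc_exp c).
Defined.

Lemma sc_curry_exists {z : SCObj L} (f : SCHom (sc_prod z c) d) :
  exists g : SCHom z sc_exp, sc_g g = curry TX (sc_g f) /\
    exp_side_eval (sc_alpha c) (sc_alpha d) ∘ prod_map_l TA (sc_f g) _ = sc_f f /\
    exp_side_eval (sc_beta c) (sc_beta d) ∘ prod_map_l TA (sc_h g) _ = sc_h f.
Proof.
  set (gx := curry TX (sc_g f)).
  assert (Hx : eval TX _ _ ∘ prod_map_l TX gx _ = sc_g f) by apply eval_curry.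
  destruct (exp_side_lift (sc_alpha c) (sc_alpha d) (sc_alpha z) gx (sc_f f)
                          (sc_alpha (sc_prod z c))) as [ga [Ga1 Ga2]];
    [exact (sc_prod_alpha_fst z c)|exact (sc_prod_alpha_snd z c)
    |rewrite Hx; exact (sc_alpha_natural f)|].
  destruct (exp_side_lift (sc_beta c) (sc_beta d) (sc_beta z) gx (sc_h f)
                          (sc_beta (sc_prod z c))) as [gb [Gb1 Gb2]];
    [exact (sc_prod_beta_fst z c)|exact (sc_prod_beta_snd z c)
    |rewrite Hx; exact (sc_beta_natural f)|].
  assert (S1 : fmap R gx ∘ sc_alpha z = sc_alpha sc_exp ∘ ga)
    by (unfold sc_exp; rewrite sc_alpha_cospan_of; symmetry; exact Ga1).
  assert (S2 : fmap R gx ∘ sc_beta z = sc_beta sc_exp ∘ gb)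
    by (unfold sc_exp; rewrite sc_beta_cospan_of; symmetry; exact Gb1).
  exists (cospan_hom_of z sc_exp ga gx gb S1 S2). auto.
Qed.

Lemma sc_exp_hom_unique {z : SCObj L} (g g' : SCHom z sc_exp) :
  eval TX _ _ ∘ prod_map_l TX (sc_g g) _ = eval TX _ _ ∘ prod_map_l TX (sc_g g') _ ->
  exp_side_eval (sc_alpha c) (sc_alpha d) ∘ prod_map_l TA (sc_f g) _ =
  exp_side_eval (sc_alpha c) (sc_alpha d) ∘ prod_map_l TA (sc_f g') _ ->
  exp_side_eval (sc_beta c) (sc_beta d) ∘ prod_map_l TA (sc_h g) _ =
  exp_side_eval (sc_beta c) (sc_beta d) ∘ prod_map_l TA (sc_h g') _ ->
  g = g'.
Proof.
  intros Ex Ea Eb.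
  assert (Gx : sc_g g = sc_g g').
  { transitivity (curry TX (eval TX _ _ ∘ prod_map_l TX (sc_g g) _)); [apply curry_unique; reflexivity|].
    rewrite Ex; symmetry; apply curry_unique; reflexivity. }
  pose proof (sc_alpha_natural g) as Na; pose proof (sc_alpha_natural g') as Na'.
  pose proof (sc_beta_natural g) as Nb; pose proof (sc_beta_natural g') as Nb'.
  unfold sc_exp in Na, Na', Nb, Nb'; rewrite ?sc_alpha_cospan_of, ?sc_beta_cospan_of in *.
  apply SCHom_eq; [apply exp_side_unique| exact Gx |apply exp_side_unique]; auto.
  - transitivity (fmap R (sc_g g) ∘ sc_alpha z); [symmetry; exact Na|rewrite Gx; exact Na'].
  - transitivity (fmap R (sc_g g) ∘ sc_beta z); [symmetry; exact Nb|rewrite Gx; exact Nb'].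
Qed.

Lemma sc_exp_is_exponential :
  is_exponential (C:=SC) (sc_prod_fst sc_exp c)
    (sc_prod_snd sc_exp c) sc_eval.
Proof.
  apply exponential_intro; [apply sc_prod_is_product|]. intro z.
  exists (sc_prod z c), (sc_prod_fst z c), (sc_prod_snd z c).
  split; [apply sc_prod_is_product|]. intro f.
  destruct (sc_curry_exists f) as [g [Gx [Ga Gb]]]. exists g. split.
  - intros m M1 M2. destruct (sc_prod_map_components g m M1 M2) as [Ma [Mx Mb]].
    apply SCHom_eq; cbn [comp StrCsp SC_comp sc_f sc_g sc_h sc_eval cospan_hom_of];
      rewrite ?Ma, ?Mx, ?Mb; [exact Ga|rewrite Gx; apply eval_curry|exact Gb].
  - intros g' m M1 M2 Ev. destruct (sc_prod_map_components g' m M1 M2) as [Ma [Mx Mb]].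
    destruct (SCHom_components Ev) as [Eva [Evx Evb]].
    cbn [comp StrCsp SC_comp sc_f sc_g sc_h sc_eval cospan_hom_of] in Eva, Evx, Evb.
    rewrite Ma in Eva; rewrite Mx in Evx; rewrite Mb in Evb.
    apply sc_exp_hom_unique.
    + etransitivity; [exact Evx|]. rewrite Gx; symmetry; apply eval_curry.
    + etransitivity; [exact Eva|]. symmetry; exact Ga.
    + etransitivity; [exact Evb|]. symmetry; exact Gb.
Qed.
End SCExponential.

(** * Subobject classifier *)

Local Notation Q := (prod_ob TA (Omega TA) (R (Omega TX))).
Local Notation q1 := (prod_fst TA (Omega TA) (R (Omega TX))).
Local Notation q2 := (prod_snd TA (Omega TA) (R (Omega TX))).
Local Notation HQ := (prod_is_product TA (Omega TA) (R (Omega TX))).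

Definition tau : Hom (R (Omega TX)) (Omega TA) := char TA (R_mono_from_one (truth TX)).

Lemma tau_holds {w} (h : Hom w (R (one TX))) : holds TA tau (fmap R (truth TX) ∘ h).
Proof. apply holds_char_iff; exists h; reflexivity. Qed.

(* [Omega_P] is the equalizer of [p ∧ τ q] and [p], i.e. the object of pairs with [p ≤ τ q]. *)
Definition P_test : Hom Q (Omega TA) :=
  and_Omega TA ∘ prod_pair (prod_is_product TA _ _) q1 (tau ∘ q2).

Local Notation Omega_P := (equalizer_ob TA P_test q1).
Local Notation P_incl := (equalizer_incl TA P_test q1).
Definition P_fst : Hom Omega_P (Omega TA) := q1 ∘ P_incl.
Definition P_kappa : Hom Omega_P (R (Omega TX)) := q2 ∘ P_incl.

Lemma P_test_eq_iff {c} (h : Hom c Q) :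
  P_test ∘ h = q1 ∘ h <-> Omega_le TA (q1 ∘ h) (tau ∘ (q2 ∘ h)).
Proof.
  unfold P_test. rewrite <- comp_assoc, prod_pair_comp, <- comp_assoc.
  apply and_Omega_eq_fst_iff.
Qed.

Definition P_lift {c} (h : Hom c Q) (H : Omega_le TA (q1 ∘ h) (tau ∘ (q2 ∘ h))) : Hom c Omega_P :=
  equalizer_lift TA P_test q1 h (proj2 (P_test_eq_iff h) H).

Lemma P_lift_fst {c} (h : Hom c Q) H : P_fst ∘ P_lift h H = q1 ∘ h.
Proof. unfold P_fst, P_lift. rewrite <- comp_assoc, equalizer_lift_incl; reflexivity. Qed.

Lemma P_lift_kappa {c} (h : Hom c Q) H : P_kappa ∘ P_lift h H = q2 ∘ h.
Proof. unfold P_kappa, P_lift. rewrite <- comp_assoc, equalizer_lift_incl; reflexivity. Qed.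

Lemma P_le {c} (j : Hom c Omega_P) : Omega_le TA (P_fst ∘ j) (tau ∘ (P_kappa ∘ j)).
Proof.
  unfold P_fst, P_kappa; rewrite <- !comp_assoc. apply P_test_eq_iff.
  rewrite !comp_assoc; f_equal; apply equalizer_eq.
Qed.

Lemma P_ext {c} (j j' : Hom c Omega_P) :
  P_fst ∘ j = P_fst ∘ j' -> P_kappa ∘ j = P_kappa ∘ j' -> j = j'.
Proof.
  unfold P_fst, P_kappa; intros E1 E2. apply (equalizer_mono TA P_test q1).
  apply (prod_ext HQ); rewrite !comp_assoc; assumption.
Qed.

Definition P_true : Hom (one TA) Omega_P.
Proof.
  refine (P_lift (prod_pair HQ (truth TA) (fmap R (truth TX) ∘ to_R_one _)) _).
  intros w k _. rewrite prod_pair_snd, holds_assoc, <- comp_assoc. apply tau_holds.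
Defined.

Lemma P_true_fst : P_fst ∘ P_true = truth TA.
Proof. unfold P_true; rewrite P_lift_fst; apply prod_pair_fst. Qed.

Lemma P_true_kappa : P_kappa ∘ P_true = fmap R (truth TX) ∘ to_R_one _.
Proof. unfold P_true; rewrite P_lift_kappa; apply prod_pair_snd. Qed.

Lemma P_true_holds {w} (r : Hom w (one TA)) : holds TA P_fst (P_true ∘ r).
Proof. unfold holds; rewrite comp_assoc, P_true_fst; f_equal; apply to_one_eq. Qed.

Lemma P_eq_true {w} (j : Hom w Omega_P) :
  holds TA P_fst j -> P_kappa ∘ j = fmap R (truth TX) ∘ to_R_one w -> j = P_true ∘ to_one TA w.
Proof.
  intros H1 H2. apply P_ext; rewrite comp_assoc.
  - rewrite P_true_fst; exact H1.
  - rewrite H2, P_true_kappa, <- comp_assoc; f_equal; apply to_R_one_eq.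
Qed.

Definition Omega_S : SCObj L := cospan_of Omega_P Omega_P (Omega TX) P_kappa P_kappa.

Definition sc_truth : SCHom sc_one Omega_S.
Proof.
  refine (cospan_hom_of sc_one Omega_S P_true (truth TX) P_true _ _);
    unfold Omega_S, sc_one; rewrite ?sc_alpha_cospan_of, ?sc_beta_cospan_of;
    symmetry; apply P_true_kappa.
Defined.

Section ClassifierSide.
Context {xU xD : X} {mx : Hom xU xD} (Mx : mono mx) {aU aD : A} {ma : Hom aU aD} (Ma : mono ma)
  {alphaU : Hom aU (R xU)} {alphaD : Hom aD (R xD)} (Sq : fmap R mx ∘ alphaU = alphaD ∘ ma).

Local Notation chx := (char TX Mx).

Lemma R_char_mono {w} (w0 : Hom w (R xU)) :
  fmap R chx ∘ (fmap R mx ∘ w0) = fmap R (truth TX) ∘ to_R_one w.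
Proof.
  pose proof (holds_char_mono TX Mx) as C; unfold holds in C.
  rewrite comp_assoc, <- fmap_comp, C, fmap_comp, <- comp_assoc; f_equal; apply to_R_one_eq.
Qed.

Definition side_char_pair : Hom aD Q := prod_pair HQ (char TA Ma) (fmap R chx ∘ alphaD).

Lemma side_char_le : Omega_le TA (q1 ∘ side_char_pair) (tau ∘ (q2 ∘ side_char_pair)).
Proof.
  unfold side_char_pair; rewrite prod_pair_fst, prod_pair_snd.
  intros w k H. apply holds_char_iff in H as [j <-].
  rewrite holds_assoc, <- comp_assoc, (comp_assoc _ _ _ _ _ alphaD), <- Sq, <- comp_assoc.
  rewrite R_char_mono. apply tau_holds.
Qed.

Definition side_char : Hom aD Omega_P := P_lift side_char_pair side_char_le.

Lemma side_char_fst : P_fst ∘ side_char = char TA Ma.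
Proof. unfold side_char; rewrite P_lift_fst; apply prod_pair_fst. Qed.

Lemma side_char_kappa : P_kappa ∘ side_char = fmap R chx ∘ alphaD.
Proof. unfold side_char; rewrite P_lift_kappa; apply prod_pair_snd. Qed.

Lemma side_char_mono : side_char ∘ ma = P_true ∘ to_one TA aU.
Proof.
  apply P_eq_true.
  - unfold holds; rewrite comp_assoc, side_char_fst. exact (holds_char_mono TA Ma).
  - rewrite comp_assoc, side_char_kappa, <- comp_assoc, <- Sq. apply R_char_mono.
Qed.

Lemma side_char_holds {w} (k : Hom w aD) (r : Hom w (one TA)) :
  side_char ∘ k = P_true ∘ r -> holds TA (char TA Ma) k.
Proof.
  intro E. rewrite <- side_char_fst, holds_assoc, E. apply P_true_holds.
Qed.

Lemma side_true_factor (phi : Hom aD Omega_P) (Hk : P_kappa ∘ phi = fmap R chx ∘ alphaD)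
    {w} (k : Hom w aD) :
  holds TA P_fst (phi ∘ k) ->
  phi ∘ k = P_true ∘ to_one TA w /\ exists w0, fmap R mx ∘ w0 = alphaD ∘ k.
Proof.
  intro H.
  assert (Ht : holds TA (tau ∘ (P_kappa ∘ phi)) k) by (apply P_le; rewrite holds_assoc; exact H).
  rewrite Hk, holds_assoc in Ht. apply holds_char_iff in Ht as [j0 Ej0].
  assert (E : fmap R chx ∘ (alphaD ∘ k) = fmap R (truth TX) ∘ j0)
    by (rewrite comp_assoc, Ej0; reflexivity).
  set (w0 := pb_pair (R_pullback (char_pullback TX Mx (to_one TX xU))) _ _ E).
  assert (Hw0 : fmap R mx ∘ w0 = alphaD ∘ k) by apply pb_pair_fst.
  split; [|exists w0; exact Hw0].
  apply P_eq_true; [exact H|]. rewrite comp_assoc, Hk, <- comp_assoc, <- Hw0. apply R_char_mono.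
Qed.

Lemma side_char_unique (phi : Hom aD Omega_P) :
  P_kappa ∘ phi = fmap R chx ∘ alphaD ->
  phi ∘ ma = P_true ∘ to_one TA aU ->
  (forall w (k : Hom w aD) (w0 : Hom w (R xU)), fmap R mx ∘ w0 = alphaD ∘ k ->
     phi ∘ k = P_true ∘ to_one TA w -> exists j, ma ∘ j = k) ->
  phi = side_char.
Proof.
  intros Hk Hm Hfac. apply P_ext; [|rewrite Hk, side_char_kappa; reflexivity].
  rewrite side_char_fst. apply Omega_ext. intros w k. rewrite holds_assoc, holds_char_iff. split.
  - intro H. destruct (side_true_factor phi Hk k H) as [Ht [w0 Hw0]]. exact (Hfac w k w0 Hw0 Ht).
  - intros [j <-]. rewrite comp_assoc, Hm, <- comp_assoc. apply P_true_holds.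
Qed.
End ClassifierSide.

Section SCClassifier.
Context {U D : SCObj L} (m : SCHom U D) (Hm : mono (C:=SC) m).

Let Ma : mono (sc_f m) := proj1 (sc_mono_components m Hm).
Let Mx : mono (sc_g m) := proj1 (proj2 (sc_mono_components m Hm)).
Let Mb : mono (sc_h m) := proj2 (proj2 (sc_mono_components m Hm)).

Local Notation chx := (char TX Mx).

Definition sc_char : SCHom D Omega_S.
Proof.
  refine (cospan_hom_of D Omega_S (side_char Mx Ma (sc_alpha_natural m)) chx
                                  (side_char Mx Mb (sc_beta_natural m)) _ _);
    unfold Omega_S; rewrite ?sc_alpha_cospan_of, ?sc_beta_cospan_of; symmetry; apply side_char_kappa.
Defined.

Lemma sc_char_square (k : SCHom U sc_one) : comp (C:=SC) sc_char m = comp (C:=SC) sc_truth k.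
Proof.
  apply SCHom_eq; cbn [comp StrCsp SC_comp sc_f sc_g sc_h sc_char sc_truth cospan_hom_of].
  - rewrite side_char_mono; f_equal; apply to_one_eq.
  - etransitivity; [exact (holds_char_mono TX Mx)|]. f_equal; apply to_one_eq.
  - rewrite side_char_mono; f_equal; apply to_one_eq.
Qed.

Lemma sc_char_pullback (k : SCHom U sc_one) : is_pullback (C:=SC) sc_char sc_truth U m k.
Proof.
  split; [apply sc_char_square|]. intros q r1 r2 E.
  destruct (SCHom_components E) as [Ea [Ex Eb]]. simpl in Ea, Ex, Eb.
  assert (Hx : holds TX chx (sc_g r1)) by (unfold holds; rewrite Ex; f_equal; apply to_one_eq).
  set (ua := char_factor TA Ma (sc_f r1) (side_char_holds Mx Ma _ _ _ Ea)).
  set (ux := char_factor TX Mx (sc_g r1) Hx).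
  set (ub := char_factor TA Mb (sc_h r1) (side_char_holds Mx Mb _ _ _ Eb)).
  assert (S1 : fmap R ux ∘ sc_alpha q = sc_alpha U ∘ ua).
  { apply (R_mono _ Mx). rewrite !comp_assoc, <- fmap_comp. unfold ux, ua.
    rewrite char_factor_spec, !sc_alpha_natural, <- comp_assoc, char_factor_spec. reflexivity. }
  assert (S2 : fmap R ux ∘ sc_beta q = sc_beta U ∘ ub).
  { apply (R_mono _ Mx). rewrite !comp_assoc, <- fmap_comp. unfold ux, ub.
    rewrite char_factor_spec, !sc_beta_natural, <- comp_assoc, char_factor_spec. reflexivity. }
  exists (cospan_hom_of q U ua ux ub S1 S2). split; [|split].
  - apply SCHom_eq; apply char_factor_spec.
  - apply sc_to_one_eq.
  - intros v V1 _. destruct (SCHom_components V1) as [Va [Vx Vb]].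
    apply SCHom_eq; [apply Ma|apply Mx|apply Mb]; unfold ua, ux, ub; cbn;
      rewrite char_factor_spec; assumption.
Qed.

Section Uniqueness.
Variable chi : SCHom D Omega_S.
Hypothesis Hchi : forall k, is_pullback (C:=SC) chi sc_truth U m k.

Lemma classified_square_components :
  sc_f chi ∘ sc_f m = P_true ∘ to_one TA _ /\ sc_g chi ∘ sc_g m = truth TX ∘ to_one TX _ /\
  sc_h chi ∘ sc_h m = P_true ∘ to_one TA _.
Proof. exact (SCHom_components (pb_square (Hchi (sc_to_one U)))). Qed.

Lemma classified_factor {q} (r : SCHom q D) :
  sc_f chi ∘ sc_f r = P_true ∘ to_one TA _ -> sc_g chi ∘ sc_g r = truth TX ∘ to_one TX _ ->
  sc_h chi ∘ sc_h r = P_true ∘ to_one TA _ -> exists u, comp (C:=SC) m u = r.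
Proof.
  intros Ea Ex Eb.
  destruct (proj2 (Hchi (sc_to_one U)) q r (sc_to_one q)) as [u [Hu _]];
    [apply SCHom_eq; assumption|].
  exists u; exact Hu.
Qed.

Lemma sc_char_unique_x : sc_g chi = chx.
Proof.
  destruct classified_square_components as [Ca [Cx Cb]].
  apply char_unique. intro k. split.
  - etransitivity; [exact Cx|]. f_equal; apply to_one_eq.
  - intros z r1 r2 Er.
    set (Ha := pb_is_pullback TA (sc_alpha D ∘ sc_f m) (fmap R r1)).
    set (Hb := pb_is_pullback TA (sc_beta D ∘ sc_h m) (fmap R r1)).
    set (t := cospan_of (pb_ob TA (sc_alpha D ∘ sc_f m) (fmap R r1))
                        (pb_ob TA (sc_beta D ∘ sc_h m) (fmap R r1)) z (pb_snd TA _ _) (pb_snd TA _ _)).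
    assert (S1 : fmap R r1 ∘ sc_alpha t = sc_alpha D ∘ (sc_f m ∘ pb_fst TA _ _)).
    { unfold t; rewrite sc_alpha_cospan_of, comp_assoc. symmetry; exact (pb_square Ha). }
    assert (S2 : fmap R r1 ∘ sc_beta t = sc_beta D ∘ (sc_h m ∘ pb_fst TA _ _)).
    { unfold t; rewrite sc_beta_cospan_of, comp_assoc. symmetry; exact (pb_square Hb). }
    destruct (classified_factor (cospan_hom_of t D _ r1 _ S1 S2)) as [u Hu]; cbn.
    { etransitivity; [exact (comp_eq_extend_r Ca _)|].
      rewrite <- comp_assoc; f_equal; apply to_one_eq. }
    { etransitivity; [exact Er|]. f_equal; apply to_one_eq. }
    { etransitivity; [exact (comp_eq_extend_r Cb _)|].
      rewrite <- comp_assoc; f_equal; apply to_one_eq. }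
    destruct (SCHom_components Hu) as [_ [Ux _]].
    exists (sc_g u). split; [exact Ux|split; [apply to_one_eq|]].
    intros v V1 _. apply Mx. rewrite V1. symmetry; exact Ux.
Qed.

Lemma sc_char_unique_a : sc_f chi = side_char Mx Ma (sc_alpha_natural m).
Proof.
  destruct classified_square_components as [Ca [Cx Cb]].
  apply side_char_unique; [|exact Ca|].
  - pose proof (sc_alpha_natural chi) as N. unfold Omega_S in N; rewrite sc_alpha_cospan_of in N.
    rewrite <- sc_char_unique_x. symmetry; exact N.
  - intros w k w0 Hw0 Hk.
    set (t := cospan_of w (sc_b U) (sc_x U) w0 (sc_beta U)).
    assert (S1 : fmap R (sc_g m) ∘ sc_alpha t = sc_alpha D ∘ k)
      by (unfold t; rewrite sc_alpha_cospan_of; exact Hw0).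
    assert (S2 : fmap R (sc_g m) ∘ sc_beta t = sc_beta D ∘ sc_h m)
      by (unfold t; rewrite sc_beta_cospan_of; exact (sc_beta_natural m)).
    destruct (classified_factor (cospan_hom_of t D k (sc_g m) (sc_h m) S1 S2)) as [u Hu];
      cbn; [exact Hk|exact Cx|exact Cb|].
    exists (sc_f u). exact (proj1 (SCHom_components Hu)).
Qed.

Lemma sc_char_unique_b : sc_h chi = side_char Mx Mb (sc_beta_natural m).
Proof.
  destruct classified_square_components as [Ca [Cx Cb]].
  apply side_char_unique; [|exact Cb|].
  - pose proof (sc_beta_natural chi) as N. unfold Omega_S in N; rewrite sc_beta_cospan_of in N.
    rewrite <- sc_char_unique_x. symmetry; exact N.
  - intros w k w0 Hw0 Hk.
    set (t := cospan_of (sc_a U) w (sc_x U) (sc_alpha U) w0).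
    assert (S1 : fmap R (sc_g m) ∘ sc_alpha t = sc_alpha D ∘ sc_f m)
      by (unfold t; rewrite sc_alpha_cospan_of; exact (sc_alpha_natural m)).
    assert (S2 : fmap R (sc_g m) ∘ sc_beta t = sc_beta D ∘ k)
      by (unfold t; rewrite sc_beta_cospan_of; exact Hw0).
    destruct (classified_factor (cospan_hom_of t D (sc_f m) (sc_g m) k S1 S2)) as [u Hu];
      cbn; [exact Ca|exact Cx|exact Hk|].
    exists (sc_h u). exact (proj2 (proj2 (SCHom_components Hu))).
Qed.

Lemma sc_char_unique : chi = sc_char.
Proof. apply SCHom_eq; [apply sc_char_unique_a|apply sc_char_unique_x|apply sc_char_unique_b]. Qed.
End Uniqueness.
End SCClassifier.

Lemma StrCsp_is_topos : is_topos SC.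
Proof.
  split; [split|split; [split|]].
  - exists sc_one; apply sc_one_terminal.
  - intros a b c f g. exists (sc_pb f g), (sc_pb_fst f g), (sc_pb_snd f g). apply sc_pb_is_pullback.
  - intros a b. exists (sc_prod a b), (sc_prod_fst a b), (sc_prod_snd a b). apply sc_prod_is_product.
  - intros a b. exists (sc_exp a b), (sc_prod (sc_exp a b) a), (sc_prod_fst _ _), (sc_prod_snd _ _),
      (sc_eval a b). apply sc_exp_is_exponential.
  - exists sc_one, Omega_S, sc_truth. split; [apply sc_one_terminal|]. intros u x m Hm.
    exists (sc_char m Hm).
    split; [intro k; apply sc_char_pullback|intros chi H; apply sc_char_unique, H].
Qed.
End StructuredCospans.

Theorem theorem3p5 (A X : Category) (L : Functor A X) (R : Functor X A) :
  geometric_morphism L R -> is_topos (StrCsp L).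
Proof.
  intros [HA [HX [[eta [eps [Heta [Heps [HL HR]]]]] _]]].
  exact (StrCsp_is_topos A X L R eta eps Heta Heps HL HR (chosen_topos HA) (chosen_topos HX)).
Qed.
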